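(* Let $G$ be a finite group with $n=|G|$, and let $v(t)$, $t\in\mathbb{N}$, be a random walk on $G$ with step distribution $\gamma$ and uniform initial distribution. Fix, for each equivalence class of irreducible (complex) representations of $G$, one representative $\rho$; write $d_\rho$ for its degree. Suppose the following condition holds: for every function $J_n:G^n\to\mathbb{C}$, if \[ \sum_{\rho_1,\dots,\rho_n} d_{\rho_1}\cdots d_{\rho_n}\,\mathrm{Tr}\Big(\big(\hat\gamma(\rho_1)^{\ell_1}\otimes\cdots\otimes\hat\gamma(\rho_n)^{\ell_n}\big)\,\hat J_n(\rho_1\otimes\cdots\otimes\rho_n)\Big)=0 \] for all positive integers $\ell_1,\dots,\ell_n$ (where $\rho_1,\dots,\rho_n$ each range over all irreducible representations of $G$ up to equivalence), then $J_n(x_1,\dots,x_n)=0$ for all $x_1,\dots,x_n\in G$. Then $v(t)$ is reconstructive, i.e. any scenery $f$ can be reconstructed up to shifts from the distribution of $\{f(v(t))\}_{t=1}^\infty$.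
   Context: A scenery on a finite group $G$ is a function $f:G\to\{0,1\}$. A random walk on $G$ is defined by: $v(1)$ has some distribution, $Z_1,Z_2,\dots$ are i.i.d. random elements of $G$ independent of $v(1)$, and $v(t+1)=Z_t v(t)$ for $t\in\mathbb{N}$; its step distribution is $\gamma(s)=\mathbb{P}(Z_t=s)$. With $v(1)$ uniform on $G$, the walk is called reconstructive if, for any two sceneries $f_1,f_2$, the distributions of $\{f_1(v(t))\}_{t=1}^\infty$ and $\{f_2(v(t))\}_{t=1}^\infty$ are identical only if $f_1$ is a shift of $f_2$, i.e. there exists $g\in G$ with $f_1(k)=f_2(kg)$ for all $k\in G$. For a function $\phi$ on a finite group $H$ and a representation $\rho$ of $H$, the Fourier transform is $\hat\phi(\rho)=\sum_{s\in H}\phi(s)\rho(s)$. For $J_n:G^n\to\mathbb{C}$, $\hat J_n(\rho_1\otimes\cdots\otimes\rho_n)=\sum_{(x_1,\dots,x_n)\in G^n}J_n(x_1,\dots,x_n)\,\rho_1(x_1)\otimes\cdots\otimes\rho_n(x_n)$. *)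

From HB Require Import structures.
From mathcomp Require Import all_boot all_order all_algebra all_fingroup all_solvable all_field all_character.
Set Implicit Arguments. Unset Strict Implicit. Unset Printing Implicit Defensive.
Import Order.TTheory GRing.Theory Num.Theory.
Local Open Scope ring_scope.

Fixpoint tdim (I : Type) (d : I -> nat) (s : seq I) : nat :=
  match s with [::] => 1%N | a :: s' => (d a * tdim d s')%N end.

Fixpoint tens (I : Type) (d : I -> nat) (F : forall a, 'M[algC]_(d a))
  (s : seq I) : 'M[algC]_(tdim d s) :=
  match s as s0 return 'M[algC]_(tdim d s0) with
  | [::] => 1%:M
  | a :: s' => tprod (F a) (@tens I d F s')
  end.

Definition tensn (n : nat) (d : 'I_n -> nat) (F : forall k, 'M[algC]_(d k)) :
  'M[algC]_(tdim d (enum 'I_n)) := @tens _ d F (enum 'I_n).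

(* The fixed representatives: 'Chi_i for i : Iirr [set: gT]. *)
Definition irrdeg (gT : finGroupType) (i : Iirr [set: gT]) : nat :=
  irr_degree (socle_of_Iirr i).

Definition fourier (gT : finGroupType) (phi : gT -> algC) (i : Iirr [set: gT]) :
  'M[algC]_(irrdeg i) := \sum_(s : gT) phi s *: 'Chi_i s.

Definition fourierN (gT : finGroupType) (n : nat)
  (J : {ffun 'I_n -> gT} -> algC) (r : {ffun 'I_n -> Iirr [set: gT]}) :
  'M[algC]_(tdim (fun k => irrdeg (r k)) (enum 'I_n)) :=
  \sum_(x : {ffun 'I_n -> gT})
     J x *: tensn (fun k => 'Chi_(r k) (x k) : 'M[algC]_(irrdeg (r k))).

Definition is_distribution (gT : finGroupType) (gamma : gT -> algC) : Prop :=
  (forall s, 0 <= gamma s) /\ \sum_(s : gT) gamma s = 1.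

(* Joint law of (v(1), ..., v(m+1)) for the walk v(t+1) = Z_t v(t), with
   v(1) uniform on G and Z_t i.i.d. of law gamma:
   P(v(1)=w_0,...,v(m+1)=w_m) = 1/|G| * prod_{k<m} gamma(w_{k+1} w_k^{-1}). *)
Definition walk_law (gT : finGroupType) (gamma : gT -> algC) (m : nat)
  (w : {ffun 'I_m.+1 -> gT}) : algC :=
  (#|gT|%:R)^-1 *
  \prod_(k < m) gamma (w (lift ord0 k) * (w (widen_ord (leqnSn m) k))^-1)%g.

Definition scenery_fdd (gT : finGroupType) (gamma : gT -> algC) (f : gT -> bool)
  (m : nat) (b : {ffun 'I_m.+1 -> bool}) : algC :=
  \sum_(w : {ffun 'I_m.+1 -> gT} | [forall k, f (w k) == b k]) walk_law gamma w.

(* Two sceneries give the same law of the observed process (a law on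
   {0,1}^N is determined by its finite-dimensional distributions). *)
Definition same_scenery_law (gT : finGroupType) (gamma : gT -> algC)
  (f1 f2 : gT -> bool) : Prop :=
  forall m (b : {ffun 'I_m.+1 -> bool}),
    scenery_fdd gamma f1 b = scenery_fdd gamma f2 b.

Definition is_shift (gT : finGroupType) (f1 f2 : gT -> bool) : Prop :=
  exists g : gT, forall k : gT, f1 k = f2 (k * g)%g.

Definition reconstructive (gT : finGroupType) (gamma : gT -> algC) : Prop :=
  forall f1 f2 : gT -> bool, same_scenery_law gamma f1 f2 -> is_shift f1 f2.

From HB Require Import structures.
From mathcomp Require Import all_boot all_order all_algebra all_fingroup all_solvable all_field all_character.
Import Order.TTheory GRing.Theory Num.Theory.
Local Open Scope ring_scope.
Set Implicit Arguments. Unset Strict Implicit. Unset Printing Implicit Defensive.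

(* For gaps l_1, ..., l_n >= 1, the probability that the observed process reads
   1 at the times 0, l_1, l_1 + l_2, ... is determined by the law of the
   observed process.  Expanding it over the increments x_k between consecutive
   observed positions of the walk writes it as
   sum_x J(x) prod_k P^(l_k)(x_k^-1), where P^(l) is the l-step transition
   kernel and J(x) counts the starting points w for which the scenery reads 1
   along the path w, x_1^-1 w, x_2^-1 x_1^-1 w, ...  By Fourier inversion,
   P^(l)(y^-1) = |G|^-1 sum_rho d_rho tr(gamma^(rho)^l rho(y)), so the
   difference of the two J's obtained from f1 and f2 satisfies the hypothesis
   and vanishes.  Choosing x as the increments of a path through the whole
   support of f1 then yields g with f1 k -> f2 (k g), and constant x shows that
   both supports have the same size. *)

Lemma tens_mulmx (I : Type) (d : I -> nat) (F G : forall a, 'M[algC]_(d a)) s :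
  tens F s *m tens G s = tens (fun a => F a *m G a) s.
Proof.
elim: s => [|a s IH] /=; first by rewrite mul1mx.
by rewrite -tprodE IH.
Qed.

Lemma mxtrace_tens (I : Type) (d : I -> nat) (F : forall a, 'M[algC]_(d a)) s :
  \tr (tens F s) = \prod_(a <- s) \tr (F a).
Proof.
elim: s => [|a s IH] /=; first by rewrite big_nil mxtrace1.
by rewrite mxtrace_prod IH big_cons.
Qed.

Lemma mxtrace_tensn_fourierN (gT : finGroupType) n
    (J : {ffun 'I_n -> gT} -> algC) (r : {ffun 'I_n -> Iirr [set: gT]})
    (F : forall k, 'M[algC]_(irrdeg (r k))) :
  \tr (tensn F *m fourierN J r) =
  \sum_x J x * \prod_(k < n) \tr (F k *m 'Chi_(r k) (x k)).
Proof.
rewrite /fourierN mulmx_sumr linear_sum; apply: eq_bigr => x _.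
by rewrite -scalemxAr linearZ /= /tensn tens_mulmx mxtrace_tens big_enum.
Qed.

Section SumFfun.

Variables (T : finType) (V : nmodType).

Definition ffcons n (a : T) (y : {ffun 'I_n -> T}) : {ffun 'I_n.+1 -> T} :=
  [ffun i => if unlift ord0 i is Some j then y j else a].

Definition fftail n (x : {ffun 'I_n.+1 -> T}) : {ffun 'I_n -> T} :=
  [ffun j => x (lift ord0 j)].

Lemma ffcons0 n a (y : {ffun 'I_n -> T}) : ffcons a y ord0 = a.
Proof. by rewrite ffunE unlift_none. Qed.

Lemma ffconsS n a (y : {ffun 'I_n -> T}) j : ffcons a y (lift ord0 j) = y j.
Proof. by rewrite ffunE liftK. Qed.

Lemma ffconsK n a (y : {ffun 'I_n -> T}) : fftail (ffcons a y) = y.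
Proof. by apply/ffunP => j; rewrite ffunE ffconsS. Qed.

Lemma sum_ffun_ord_recl n (F : {ffun 'I_n.+1 -> T} -> V) :
  \sum_x F x = \sum_a \sum_(y : {ffun 'I_n -> T}) F (ffcons a y).
Proof.
rewrite pair_bigA /= (reindex (fun p : T * {ffun 'I_n -> T} => ffcons p.1 p.2)) //=.
exists (fun x : {ffun 'I_n.+1 -> T} => (x ord0, fftail x)) => [[a y] _|x _] /=.
  by rewrite ffcons0 ffconsK.
apply/ffunP => i; rewrite ffunE; case: unliftP => [j ->|->] //.
by rewrite ffunE.
Qed.

Lemma sum_ffun_ord0 (F : {ffun 'I_0 -> T} -> V) y0 : \sum_x F x = F y0.
Proof.
rewrite (eq_bigr (fun _ => F y0)); last by move=> x _; congr F; apply/ffunP => -[].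
by rewrite sumr_const card_ffun card_ord expn0.
Qed.

End SumFfun.

Section FourierInversion.

Variables (gT : finGroupType) (gamma : gT -> algC).

(* [transition l y] is the probability that l steps of the walk move w to y w. *)
Fixpoint transition (l : nat) (y : gT) : algC :=
  if l is l'.+1 then \sum_s gamma s * transition l' (y * s^-1)%g
  else (y == 1%g)%:R.

Lemma transitionS l (w w' : gT) :
  \sum_u gamma (u * w^-1)%g * transition l (w' * u^-1)%g =
  transition l.+1 (w' * w^-1)%g.
Proof.
rewrite /=; symmetry; rewrite (reindex (fun u => (u * w^-1)%g)) /=; last first.
  by exists (fun s => (s * w)%g) => s _; rewrite ?mulgK ?mulgKV.
apply: eq_bigr => u _; congr (_ * transition _ _).
by rewrite invMg invgK mulgA mulgKV.
Qed.

Lemma sum_irrdeg_mxtrace_Chi (y : gT) :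
  \sum_(i : Iirr [set: gT]) (irrdeg i)%:R * \tr ('Chi_i y) = #|gT|%:R *+ (y == 1%g).
Proof.
have := congr1 (fun phi : 'CF([set: gT]) => phi y) (cfReg_sum [set: gT]).
rewrite /= cfRegE cardsT => ->; rewrite sum_cfunE; apply: eq_bigr => i _.
by rewrite cfunE irr1_degree -irrRepr cfunE inE mulr1n.
Qed.

Lemma fourierX (i : Iirr [set: gT]) l :
  fourier gamma i ^+ l = \sum_u transition l u *: 'Chi_i u.
Proof.
elim: l => [|l IH].
  rewrite expr0 (bigD1 1%g) //= eqxx scale1r repr_mx1 big1 ?addr0 //.
  by move=> u /negbTE ->; rewrite scale0r.
rewrite exprSr IH /fourier -mulmxE mulmx_suml.
rewrite (eq_bigr (fun u => \sum_s (transition l u * gamma s) *: 'Chi_i (u * s)%g));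
  last first.
  move=> u _; rewrite -scalemxAl mulmx_sumr scaler_sumr; apply: eq_bigr => s _.
  by rewrite -scalemxAr scalerA repr_mxM ?inE.
rewrite exchange_big /=; symmetry.
rewrite (eq_bigr (fun y => \sum_s (gamma s * transition l (y * s^-1)%g) *: 'Chi_i y));
  last by move=> y _; rewrite scaler_suml.
rewrite exchange_big /=; apply: eq_bigr => s _.
rewrite (reindex (fun u => (u * s)%g)) /=; last first.
  by exists (fun y => (y * s^-1)%g) => y _; rewrite ?mulgK ?mulgKV.
by apply: eq_bigr => u _; rewrite mulgK mulrC.
Qed.

Lemma fourier_inversion l (y : gT) :
  \sum_(i : Iirr [set: gT]) (irrdeg i)%:R * \tr (fourier gamma i ^+ l *m 'Chi_i y)
  = #|gT|%:R * transition l y^-1.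
Proof.
rewrite (eq_bigr (fun i => \sum_u
    transition l u * ((irrdeg i)%:R * \tr ('Chi_i (u * y)%g)))); last first.
  move=> i _; rewrite fourierX mulmx_suml linear_sum mulr_sumr; apply: eq_bigr => u _.
  by rewrite -scalemxAl linearZ /= repr_mxM ?inE // mulrCA.
rewrite exchange_big /= (bigD1 y^-1%g) //= [X in _ + X]big1 => [|u neq].
  by rewrite addr0 -mulr_sumr sum_irrdeg_mxtrace_Chi mulVg eqxx mulr1n mulrC.
rewrite -mulr_sumr sum_irrdeg_mxtrace_Chi (_ : (u * y == 1)%g = false) ?mulr0n ?mulr0 //.
by apply: contraNF neq => /eqP uy1; rewrite -(mulgK y u) uy1 mul1g.
Qed.

Lemma fourier_condition_sum n (J : {ffun 'I_n -> gT} -> algC) (l : 'I_n -> nat) :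
  \sum_(r : {ffun 'I_n -> Iirr [set: gT]})
     (\prod_(k < n) (irrdeg (r k))%:R) *
     \tr (tensn (fun k => fourier gamma (r k) ^+ l k) *m fourierN J r)
  = \sum_x J x * \prod_(k < n) (#|gT|%:R * transition (l k) (x k)^-1).
Proof.
under eq_bigr => r _ do rewrite mxtrace_tensn_fourierN mulr_sumr.
rewrite exchange_big /=; apply: eq_bigr => x _.
under eq_bigr => r _ do rewrite mulrCA.
rewrite -mulr_sumr; congr (_ * _); symmetry.
under eq_bigr => k _ do rewrite -fourier_inversion.
by rewrite bigA_distr_bigA /=; apply: eq_bigr => r _; rewrite big_split.
Qed.

End FourierInversion.

Section ObservedWalk.

Variables (gT : finGroupType) (gamma : gT -> algC).

Definition walk_weight m (w : {ffun 'I_m.+1 -> gT}) : algC :=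
  \prod_(k < m) gamma (w (lift ord0 k) * (w (widen_ord (leqnSn m) k))^-1)%g.

Definition obs_indicator (f : gT -> bool) (c : nat -> bool) m
    (w : {ffun 'I_m.+1 -> gT}) : algC :=
  \prod_(k < m.+1) (if c k then (f (w k))%:R else 1).

(* Only the times t with [c t] are observed: [obs_prob f c m w] is the
   probability that the walk started at w reads 1 at every observed t <= m. *)
Fixpoint obs_prob (f : gT -> bool) (c : nat -> bool) m (w : gT) : algC :=
  (if c 0%N then (f w)%:R else 1) *
  if m is m'.+1 then \sum_u gamma (u * w^-1)%g * obs_prob f (fun t => c t.+1) m' u
  else 1.

Lemma obs_probS f c m w :
  obs_prob f c m.+1 w = (if c 0%N then (f w)%:R else 1) *
    \sum_u gamma (u * w^-1)%g * obs_prob f (fun t => c t.+1) m u.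
Proof. by []. Qed.

Lemma walk_weight_cons m a (y : {ffun 'I_m.+1 -> gT}) :
  walk_weight (ffcons a y) = gamma (y ord0 * a^-1)%g * walk_weight y.
Proof.
rewrite /walk_weight big_ord_recl; congr (_ * _).
  by rewrite ffconsS (_ : widen_ord _ ord0 = ord0) ?ffcons0 //; apply: val_inj.
apply: eq_bigr => k _; rewrite ffconsS.
rewrite (_ : widen_ord _ (lift ord0 k) = lift ord0 (widen_ord (leqnSn m) k)) ?ffconsS //.
exact: val_inj.
Qed.

Lemma obs_indicator_cons f c m a (y : {ffun 'I_m.+1 -> gT}) :
  obs_indicator f c (ffcons a y) =
  (if c 0%N then (f a)%:R else 1) * obs_indicator f (fun t => c t.+1) y.
Proof.
rewrite /obs_indicator big_ord_recl ffcons0; congr (_ * _).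
by apply: eq_bigr => k _; rewrite ffconsS.
Qed.

Lemma obs_indicatorE f c m (w : {ffun 'I_m.+1 -> gT}) :
  obs_indicator f c w = ([forall k : 'I_m.+1, c k ==> f (w k)])%:R.
Proof.
case: forallP => [H|/forallP]; first by apply: big1 => k _; move: (H k); case: (c k) => //= ->.
rewrite negb_forall => /existsP[k]; rewrite negb_imply => /andP[ck /negbTE fk].
by rewrite /obs_indicator (bigD1 k) //= ck fk mul0r.
Qed.

Lemma sum_obs_walk_weight f m : forall c (h : gT -> algC),
  \sum_(w : {ffun 'I_m.+1 -> gT}) h (w ord0) * obs_indicator f c w * walk_weight w
  = \sum_a h a * obs_prob f c m a.
Proof.
elim: m => [|m IH] c h; rewrite sum_ffun_ord_recl; apply: eq_bigr => a _ /=.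
  rewrite (sum_ffun_ord0 _ [ffun i => a]) ffcons0 /obs_indicator /walk_weight.
  by rewrite big_ord0 big_ord1 ffcons0 /= !mulr1.
under eq_bigr => y _ do rewrite ffcons0 obs_indicator_cons walk_weight_cons.
rewrite -(IH _ (fun u => gamma (u * a^-1)%g)) !mulr_sumr; apply: eq_bigr => y _.
by rewrite !mulrA; congr (_ * _); rewrite -!mulrA; congr (_ * (_ * _)); rewrite mulrC.
Qed.

Lemma obs_prob_ext f m : forall (c1 c2 : nat -> bool) w, c1 =1 c2 ->
  obs_prob f c1 m w = obs_prob f c2 m w.
Proof.
elim: m => [|m IH] c1 c2 w E /=; rewrite E //.
by congr (_ * _); apply: eq_bigr => u _; congr (_ * _); apply: IH.
Qed.

Lemma obs_prob_skip f l : forall c m w, (forall t, (t < l)%N -> c t = false) ->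
  obs_prob f c (l + m) w =
  \sum_w' transition gamma l (w' * w^-1)%g * obs_prob f (fun t => c (t + l)%N) m w'.
Proof.
elim: l => [|l IH] c m w Hc.
  rewrite (bigD1 w) //= mulgV eqxx mul1r big1 ?addr0.
    by apply: obs_prob_ext => t; rewrite addn0.
  by move=> u nu; rewrite -eq_mulgV1 (negbTE nu) mul0r.
rewrite addSn obs_probS Hc // mul1r.
have Hc' t : (t < l)%N -> c t.+1 = false by move=> lt; apply: Hc.
under eq_bigr => u _ do rewrite (IH _ _ _ Hc') mulr_sumr.
rewrite exchange_big; apply: eq_bigr => w' _.
rewrite -transitionS mulr_suml.
apply: eq_bigr => u _; rewrite mulrA; congr (_ * _).
by apply: obs_prob_ext => t; rewrite addnS.
Qed.

(* The probability that the walk started at w reads 1 at the times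
   0, l 0, l 0 + l 1, ..., l 0 + ... + l (n - 1). *)
Fixpoint gap_prob (f : gT -> bool) n (l : nat -> nat) (w : gT) : algC :=
  (f w)%:R * if n is n'.+1 then
    \sum_w' transition gamma (l 0%N) (w' * w^-1)%g * gap_prob f n' (fun t => l t.+1) w'
  else 1.

Lemma gap_probS f n l w : gap_prob f n.+1 l w = (f w)%:R *
  \sum_w' transition gamma (l 0%N) (w' * w^-1)%g * gap_prob f n (fun t => l t.+1) w'.
Proof. by []. Qed.

Fixpoint gap_times n (l : nat -> nat) (t : nat) : bool :=
  if n is n'.+1 then
    (t == 0%N) || ((l 0%N <= t)%N && gap_times n' (fun s => l s.+1) (t - l 0%N))
  else t == 0%N.

Lemma obs_prob_gap_times f n : forall (l : nat -> nat) w,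
  (forall k, (k < n)%N -> (0 < l k)%N) ->
  obs_prob f (gap_times n l) (\sum_(k < n) l k)%N w = gap_prob f n l w.
Proof.
elim: n => [|n IH] l w Hl; first by rewrite big_ord0 /= !mulr1.
rewrite big_ord_recl gap_probS.
have := Hl 0%N isT; case E: (l 0%N) => [|p] // _.
rewrite addSn obs_probS (_ : gap_times n.+1 l 0 = true) //; congr (_ * _).
have Hc t : (t < p)%N -> gap_times n.+1 l t.+1 = false.
  by move=> lt /=; rewrite E ltnS leqNgt lt.
under eq_bigr => u _ do rewrite (obs_prob_skip _ _ _ Hc) mulr_sumr.
rewrite exchange_big; apply: eq_bigr => w' _.
rewrite -(IH (fun t => l t.+1)) => [|k lt]; last exact: Hl.
rewrite -transitionS mulr_suml; apply: eq_bigr => u _; rewrite mulrA; congr (_ * _).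
by apply: obs_prob_ext => t /=; rewrite E ltnS leq_addl /= subSS addnK.
Qed.

Fixpoint path_indicator (f : gT -> bool) n : {ffun 'I_n -> gT} -> gT -> algC :=
  if n is n'.+1 then
    fun x w => (f w)%:R * path_indicator f (fftail x) ((x ord0)^-1 * w)%g
  else fun _ w => (f w)%:R.

Lemma gap_prob_increments f n : forall (l : nat -> nat) w, gap_prob f n l w =
  \sum_(x : {ffun 'I_n -> gT})
     path_indicator f x w * \prod_(k < n) transition gamma (l k) (x k)^-1.
Proof.
elim: n => [|n IH] l w; first by rewrite (sum_ffun_ord0 _ [ffun i => w]) big_ord0 /= !mulr1.
rewrite /= sum_ffun_ord_recl (reindex (fun a => (a^-1 * w)%g)) /=; last first.
  by exists (fun w' => (w * w'^-1)%g) => a _; rewrite invMg invgK ?mulKVg ?mulgKV.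
rewrite mulr_sumr; apply: eq_bigr => a _.
rewrite IH !mulr_sumr; apply: eq_bigr => y _.
rewrite ffconsK ffcons0 big_ord_recl ffcons0 mulgK.
under [X in _ = _ * (_ * X)]eq_bigr => k _ do rewrite ffconsS.
by rewrite -!mulrA; congr (_ * _); rewrite mulrCA.
Qed.

Lemma sum_gap_prob f n (l : nat -> nat) :
  \sum_a gap_prob f n l a =
  \sum_(x : {ffun 'I_n -> gT})
     (\sum_a path_indicator f x a) * \prod_(k < n) transition gamma (l k) (x k)^-1.
Proof.
under eq_bigr => a _ do rewrite gap_prob_increments.
by rewrite exchange_big; apply: eq_bigr => x _; rewrite mulr_suml.
Qed.

Definition increments n (P : nat -> gT) : {ffun 'I_n -> gT} :=
  [ffun k : 'I_n => (P k * (P k.+1)^-1)%g].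

Lemma path_indicator_increments f n : forall (P : nat -> gT) g,
  path_indicator f (increments n P) (P 0%N * g)%g = \prod_(k < n.+1) (f (P k * g)%g)%:R.
Proof.
elim: n => [|n IH] P g; first by rewrite big_ord1.
rewrite /= big_ord_recl; congr (_ * _).
have -> : fftail (increments n.+1 P) = increments n (fun t => P t.+1).
  by apply/ffunP => k; rewrite !ffunE.
by rewrite ffunE /= invMg invgK -mulgA mulKg (IH (fun t => P t.+1)).
Qed.

Lemma path_indicator_ge0 f n : forall (x : {ffun 'I_n -> gT}) w, 0 <= path_indicator f x w.
Proof. by elim: n => [|n IH] x w /=; rewrite ?mulr_ge0 ?ler0n. Qed.

End ObservedWalk.

Section Reconstruction.

Variables (gT : finGroupType) (gamma : gT -> algC).

Lemma sum_scenery_fdd_obs (f : gT -> bool) (c : nat -> bool) m :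
  \sum_(b : {ffun 'I_m.+1 -> bool})
     ([forall k : 'I_m.+1, c k ==> b k])%:R * scenery_fdd gamma f b
  = \sum_(w : {ffun 'I_m.+1 -> gT}) obs_indicator f c w * walk_law gamma w.
Proof.
rewrite /scenery_fdd; under eq_bigr do rewrite mulr_sumr big_mkcond /=.
rewrite exchange_big /=; apply: eq_bigr => w _.
rewrite (bigD1 [ffun k => f (w k)]) //= big1 ?addr0 => [|b nb].
  rewrite (_ : [forall k, _] = true); last by apply/forallP => k; rewrite ffunE.
  rewrite obs_indicatorE; congr ((nat_of_bool _)%:R * _).
  by apply: eq_forallb => k; rewrite ffunE.
case: ifP => // /forallP fb; case/eqP: nb.
by apply/ffunP => k; rewrite ffunE; apply/esym/eqP/fb.
Qed.

Lemma same_law_obs_prob (f1 f2 : gT -> bool) :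
  same_scenery_law gamma f1 f2 ->
  forall c m, \sum_a obs_prob gamma f1 c m a = \sum_a obs_prob gamma f2 c m a.
Proof.
move=> Hlaw c m.
have card_neq0 : #|gT|%:R != 0 :> algC by rewrite pnatr_eq0 -lt0n; apply/card_gt0P; exists 1%g.
have E f : \sum_a obs_prob gamma f c m a =
    #|gT|%:R * \sum_(w : {ffun 'I_m.+1 -> gT}) obs_indicator f c w * walk_law gamma w.
  rewrite -(eq_bigr _ (fun a _ => mul1r (obs_prob gamma f c m a))).
  rewrite -(sum_obs_walk_weight gamma f m c (fun=> 1)) mulr_sumr.
  by apply: eq_bigr => w _; rewrite mul1r /walk_law mulrCA mulVKf.
by rewrite !E -!sum_scenery_fdd_obs; congr (_ * _); apply: eq_bigr => b _; rewrite Hlaw.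
Qed.

Lemma same_law_gap_prob (f1 f2 : gT -> bool) n (l : nat -> nat) :
  same_scenery_law gamma f1 f2 -> (forall k, (k < n)%N -> (0 < l k)%N) ->
  \sum_a gap_prob gamma f1 n l a = \sum_a gap_prob gamma f2 n l a.
Proof.
move=> Hlaw Hl.
under eq_bigr => a _ do rewrite -(obs_prob_gap_times gamma f1 a Hl).
under [RHS]eq_bigr => a _ do rewrite -(obs_prob_gap_times gamma f2 a Hl).
exact: same_law_obs_prob.
Qed.

Lemma same_law_path_sums n (f1 f2 : gT -> bool) :
  same_scenery_law gamma f1 f2 ->
  (forall J : {ffun 'I_n -> gT} -> algC,
     (forall l : 'I_n -> nat, (forall k, (0 < l k)%N) ->
        \sum_(r : {ffun 'I_n -> Iirr [set: gT]})
           (\prod_(k < n) (irrdeg (r k))%:R) *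
           \tr (tensn (fun k => fourier gamma (r k) ^+ l k) *m fourierN J r)
        = 0) ->
     forall x, J x = 0) ->
  forall x : {ffun 'I_n -> gT},
    \sum_a path_indicator f1 x a = \sum_a path_indicator f2 x a.
Proof.
move=> Hlaw Hfourier x; apply/eqP; rewrite -subr_eq0 -sumrB; apply/eqP.
move: x; apply: Hfourier => l Hl.
pose l' t := odflt 1%N (omap l (insub t)).
have l'E (k : 'I_n) : l' k = l k by rewrite /l' valK.
have Hl' k : (k < n)%N -> (0 < l' k)%N.
  by rewrite /l'; case: insubP => //= k' _ _; apply: Hl.
rewrite fourier_condition_sum.
under eq_bigr => x _ do rewrite [\prod_(k < n) _]big_split /= prodr_const card_ord mulrCA.
rewrite -mulr_sumr; apply/eqP; rewrite mulf_eq0; apply/orP; right; apply/eqP.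
have /eqP := same_law_gap_prob Hlaw Hl'; rewrite -subr_eq0 !sum_gap_prob -sumrB.
move/eqP => gap_sums_eq; rewrite -[RHS]gap_sums_eq.
apply: eq_bigr => x _; rewrite sumrB mulrBl.
by under eq_bigr => k _ do rewrite -l'E.
Qed.

Lemma card_support_path_sum (f : gT -> bool) n :
  \sum_a path_indicator f (increments n (fun=> 1%g)) a = #|[set k | f k]|%:R.
Proof.
rewrite -sum1_card natr_sum [RHS]big_mkcond /=; apply: eq_bigr => a _.
rewrite -{1}[a]mul1g path_indicator_increments.
under eq_bigr => k _ do rewrite mul1g.
by rewrite prodr_const card_ord inE; case: (f a); rewrite ?expr1n ?expr0n.
Qed.

Lemma path_indicator_increments_neq0 (f : gT -> bool) n P g :
  path_indicator f (increments n P) (P 0%N * g)%g != 0 ->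
  forall t, (t <= n)%N -> f (P t * g)%g.
Proof.
rewrite path_indicator_increments => /prodf_neq0 Hf t le_tn.
by have := Hf (Ordinal (le_tn : (t < n.+1)%N)) isT; rewrite pnatr_eq0 eqb0 negbK.
Qed.

Lemma shift_support_of_path_sums (f1 f2 : gT -> bool) :
  (forall x : {ffun 'I_#|gT| -> gT},
     \sum_a path_indicator f1 x a = \sum_a path_indicator f2 x a) ->
  exists g, forall k, f1 k -> f2 (k * g)%g.
Proof.
move=> Hsum; case: (pickP f1) => [w0 f1w0|f1_0]; last by exists 1%g => k; rewrite f1_0.
pose e := enum [set k | f1 k]; pose P t := nth w0 e t.
pose x := increments #|gT| P.
have f1P t : f1 (P t).
  rewrite /P; case: (ltnP t (size e)) => [lt_te|le_et]; last by rewrite nth_default.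
  by have := mem_nth w0 lt_te; rewrite mem_enum inE.
have sum1_neq0 : \sum_a path_indicator f1 x a != 0.
  rewrite (bigD1 (P 0%N)) //= -{1}[P 0%N]mulg1 path_indicator_increments.
  rewrite big1 => [|k _]; last by rewrite mulg1 f1P.
  by rewrite lt0r_neq0 // ltr_wpDr ?ltr01 // sumr_ge0 // => a _; apply: path_indicator_ge0.
have [w' nz] : exists w', path_indicator f2 x w' != 0.
  apply/existsP; apply: contraR sum1_neq0 => /existsPn f2x0.
  by rewrite Hsum big1 // => a _; apply/eqP; move: (f2x0 a); rewrite negbK.
exists ((P 0%N)^-1 * w')%g => k f1k.
have ke : k \in e by rewrite mem_enum inE.
rewrite -(nth_index w0 ke); apply: (@path_indicator_increments_neq0 f2 #|gT| P).
  by rewrite mulKVg.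
by apply: leq_trans (max_card [set k | f1 k]); rewrite cardE ltnW // index_mem.
Qed.

Lemma shift_of_card_support (f1 f2 : gT -> bool) g :
  (forall k, f1 k -> f2 (k * g)%g) -> #|[set k | f1 k]| = #|[set k | f2 k]| ->
  is_shift f1 f2.
Proof.
move=> sub card_eq; exists g => k.
have img : [set (k * g)%g | k in [set k | f1 k]] = [set k | f2 k].
  apply/eqP; rewrite eqEcard card_imset; last exact: (mulIg g).
  rewrite -card_eq leqnn andbT; apply/subsetP => _ /imsetP[k' + ->].
  by rewrite inE => /sub; rewrite inE.
apply/idP/idP => [|f2k]; first exact: sub.
have : (k * g)%g \in [set k | f2 k] by rewrite inE.
by rewrite -img => /imsetP[k' + /(mulIg g) ->]; rewrite inE.
Qed.

End Reconstruction.

Theorem theorem1 (gT : finGroupType) (gamma : gT -> algC) :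
  is_distribution gamma ->
  (forall J : {ffun 'I_#|gT| -> gT} -> algC,
     (forall l : 'I_#|gT| -> nat, (forall k, (0 < l k)%N) ->
        \sum_(r : {ffun 'I_#|gT| -> Iirr [set: gT]})
           (\prod_(k < #|gT|) (irrdeg (r k))%:R) *
           \tr (tensn (fun k => fourier gamma (r k) ^+ l k) *m fourierN J r)
        = 0) ->
     forall x, J x = 0) ->
  reconstructive gamma.
Proof.
move=> _ Hfourier f1 f2 Hlaw.
have Hsum := same_law_path_sums Hlaw Hfourier.
have [g sub] := shift_support_of_path_sums Hsum.
apply: (shift_of_card_support sub); apply/eqP.
by rewrite -(eqr_nat algC) -!(card_support_path_sum _ #|gT|) Hsum.
Qed.
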